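(* For every integer $n\ge1$, $$\sum_{k=1}^n\frac{\binom{2n}{k}(-1)^k}{k}=-H_{2n}+\frac34\sum_{k=1}^n\frac{\binom{2k}{k}(-1)^k}{k}-\frac14\sum_{k=1}^n\frac{2k\binom{2k}{k}(-1)^k}{(2k-1)^2}.$$
   Context: $H_m=\sum_{j=1}^m1/j$. *)

From mathcomp Require Import all_boot all_algebra.
Set Implicit Arguments. Unset Strict Implicit. Unset Printing Implicit Defensive.
Import GRing.Theory Num.Theory.
Local Open Scope ring_scope.

Definition harmonic (m : nat) : rat := \sum_(1 <= j < m.+1) (j%:R)^-1.

From mathcomp Require Import all_boot all_algebra.
From mathcomp Require Import ring lra.
Import GRing.Theory Num.Theory.
Local Open Scope ring_scope.

(* Write A(m, j) for the partial alternating sum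
   sum_{k=1}^j C(m,k)(-1)^k/k.  Pascal's rule gives the row recurrence
     A(m+1, j) = A(m, j) + ((-1)^j C(m,j) - 1)/(m+1),
   which, applied twice together with one extension of the column index,
   expresses A(2n+2, n+1) - A(2n, n) through C(2n,n+1), C(2n+1,n+1) and the
   term -1/(2n+1) - 1/(2n+2).  The latter is exactly the increment of -H_{2n};
   the binomials are rewritten as rational multiples of c = C(2n,n) (as is
   C(2n+2,n+1), which occurs in the new terms of the two sums on the right),
   after which the increments of both sides agree by a field identity in n
   and c. *)

Definition alt_binom_sum (m j : nat) : rat :=
  \sum_(1 <= k < j.+1) ('C(m, k)%:R * (-1) ^+ k / k%:R).

Lemma alt_binom_sum_succ (m j : nat) :
  alt_binom_sum m.+1 j
  = alt_binom_sum m j + ((-1) ^+ j * 'C(m, j)%:R - 1) / m.+1%:R.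
Proof.
elim: j => [|j IH].
  by rewrite /alt_binom_sum !big_geq // bin0 expr0 mulr1 subrr mul0r addr0.
rewrite /alt_binom_sum big_nat_recr //= -/(alt_binom_sum m.+1 j) IH.
rewrite big_nat_recr //= -/(alt_binom_sum m j).
have m1_neq0 : m.+1%:R != 0 :> rat by rewrite pnatr_eq0.
have j1_neq0 : j.+1%:R != 0 :> rat by rewrite pnatr_eq0.
have diag : 'C(m.+1, j.+1)%:R = m.+1%:R * 'C(m, j)%:R / j.+1%:R :> rat.
  by rewrite -natrM mul_bin_diag natrM mulrAC divff // mul1r.
have pascal : 'C(m, j.+1)%:R = 'C(m.+1, j.+1)%:R - 'C(m, j)%:R :> rat.
  by rewrite binS natrD addrK.
rewrite pascal diag exprS.
by field; rewrite -!mulrS m1_neq0 j1_neq0.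
Qed.

Lemma harmonicS (m : nat) : harmonic m.+1 = harmonic m + m.+1%:R^-1.
Proof. by rewrite /harmonic big_nat_recr. Qed.

Lemma double_succ (n : nat) : (2 * n.+1 = (2 * n).+2)%N.
Proof. by rewrite mulnS add2n. Qed.

Lemma natr_div_succ {a x y : nat} :
  (a.+1 * x = y)%N -> x%:R = y%:R / a.+1%:R :> rat.
Proof.
move=> <-; have a1_neq0 : a.+1%:R != 0 :> rat by rewrite pnatr_eq0.
by rewrite natrM mulrAC divff // mul1r.
Qed.

Lemma bin_double_succ (n : nat) :
  (n.+1 * 'C(2 * n, n.+1) = n * 'C(2 * n, n))%N.
Proof. by rewrite mul_bin_left mul2n -addnn addnK. Qed.

Lemma bin_double_succ_succ (n : nat) :
  (n.+1 * 'C((2 * n).+1, n.+1) = (2 * n).+1 * 'C(2 * n, n))%N.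
Proof. by rewrite -mul_bin_diag. Qed.

Lemma central_bin_succ (n : nat) :
  (n.+1 * 'C(2 * n.+1, n.+1) = 2 * (2 * n).+1 * 'C(2 * n, n))%N.
Proof.
rewrite double_succ.
have symm : 'C((2 * n).+1, n) = 'C((2 * n).+1, n.+1).
  by rewrite -[in RHS]bin_sub ?subSS ?mul2n -?addnn ?addnK // ltnS leq_addl.
rewrite -[LHS]mul_bin_diag /= symm.
apply/eqP; rewrite -(eqn_pmul2l (ltn0Sn n)) mulnCA bin_double_succ_succ.
by apply/eqP; ring.
Qed.

Lemma alt_binom_sum_diag_step (n : nat) :
  alt_binom_sum (2 * n.+1) n.+1
  = alt_binom_sum (2 * n) n
    + (-1) ^+ n.+1 * ('C(2 * n, n.+1)%:R / n.+1%:R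
                      + 'C(2 * n, n.+1)%:R / (2 * n).+1%:R
                      + 'C((2 * n).+1, n.+1)%:R / (2 * n).+2%:R)
    - ((2 * n).+1%:R^-1 + (2 * n).+2%:R^-1).
Proof.
rewrite double_succ.
rewrite !alt_binom_sum_succ {1}/alt_binom_sum big_nat_recr //= -/(alt_binom_sum _ n).
by rewrite !mulrDr !mulrBl !mul1r; ring.
Qed.

Theorem mainTheorem13 (n : nat) (hn : (1 <= n)%N) :
  \sum_(1 <= k < n.+1) ('C(2 * n, k)%:R * (-1) ^+ k / k%:R : rat)
  = - harmonic (2 * n)
    + 3 / 4 * \sum_(1 <= k < n.+1) ('C(2 * k, k)%:R * (-1) ^+ k / k%:R : rat)
    - 1 / 4 * \sum_(1 <= k < n.+1)
        ((2 * k)%:R * 'C(2 * k, k)%:R * (-1) ^+ k / ((2 * k)%:R - 1) ^+ 2 : rat).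
Proof.
(* The identity also holds, trivially, for n = 0. *)
clear hn; elim: n => [|n IH].
  by rewrite !big_geq // /harmonic big_geq // oppr0 !mulr0 !addr0 subr0.
rewrite -/(alt_binom_sum _ _) in IH.
rewrite -[LHS]/(alt_binom_sum (2 * n.+1) n.+1) alt_binom_sum_diag_step IH.
rewrite !(big_nat_recr n.+1) //= (natr_div_succ (central_bin_succ n)).
rewrite (natr_div_succ (bin_double_succ n)) (natr_div_succ (bin_double_succ_succ n)).
rewrite double_succ.
rewrite !harmonicS.
(* What remains is a rational-function identity in n, c = C(2n,n) and the
   old values of H_{2n} and of the two sums, with denominators 4, n+1, 2n+1,
   2n+2 and (2n+1)^2. *)
move: (harmonic _) (\sum_(1 <= i < n.+1) _) (\sum_(1 <= i < n.+1) _) => H S1 S2.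
rewrite -[n.+1]addn1 -[(2 * n).+1]addn1 !natrM !natrD exprD expr1.
have n_ge0 : 0 <= n%:R :> rat := ler0n _ _.
field; apply/and3P; split; rewrite lt0r_neq0 //; lra.
Qed.
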